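(* For every integer $n\geq 3$, the shortest binary word that has $n$ distinct factorizations in two Lyndon words is the word $00(10)^{n-2}11$, which has length $2n$.
   Context: Words are over the alphabet $\{0,1\}$ with the lexicographic order induced by $0<1$. A Lyndon word is a nonempty primitive word that is lexicographically strictly smaller than all of its other rotations (conjugates) (equivalently, strictly smaller than all its nonempty proper suffixes). A factorization of a word $u$ in two Lyndon words is a pair $(x,y)$ of Lyndon words (both nonempty) with $u=xy$; two such factorizations are distinct if the pairs differ. ''The shortest'' means that this word has $n$ distinct such factorizations, and every other binary word with (at least) $n$ distinct such factorizations is strictly longer. *)

From mathcomp Require Import all_boot.
Set Implicit Arguments. Unset Strict Implicit. Unset Printing Implicit Defensive.

(* Binary words: seq bool, with letter 0 = false, letter 1 = true (so 0 < 1). *)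

Fixpoint lexlt (s t : seq bool) : bool :=
  match s, t with
  | [::], _ :: _ => true
  | _, [::] => false
  | a :: s', b :: t' => (~~ a && b) || ((a == b) && lexlt s' t')
  end.

Definition primitive (w : seq bool) : Prop :=
  forall (u : seq bool) (m : nat), 1 < m -> w <> flatten (nseq m u).

Definition lyndon (w : seq bool) : Prop :=
  w <> [::] /\ primitive w /\
  forall k, 0 < k < size w -> lexlt w (rot k w).

Definition lyndon_fact (u : seq bool) (p : seq bool * seq bool) : Prop :=
  u = p.1 ++ p.2 /\ lyndon p.1 /\ lyndon p.2.

Definition has_n_fact (u : seq bool) (n : nat) : Prop :=
  exists l : seq (seq bool * seq bool),
    [/\ uniq l, size l = n & forall p, lyndon_fact u p <-> p \in l].

Definition has_atleast_n_fact (u : seq bool) (n : nat) : Prop :=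
  exists l : seq (seq bool * seq bool),
    [/\ uniq l, size l = n & forall p, p \in l -> lyndon_fact u p].

Definition wordn (n : nat) : seq bool :=
  [:: false; false] ++ flatten (nseq (n - 2) [:: true; false]) ++ [:: true; true].

(* A Lyndon word of length at least two starts with 0 and ends with 1.  Hence
   if both c and c+1 cut a word u into two Lyndon words, the letter u_c would
   have to be 1 (last letter of the prefix of length c+1) and 0 (first letter
   of the suffix starting at c): the cut positions of u lie in ]0, |u|[ and no
   two of them are consecutive, so n of them need |u| >= 2n, and |u| = 2n
   forces them to be exactly the odd positions.  The letters of u are then
   forced one by one and spell 00(10)^(n-2)11, whose Lyndon cuts are indeed
   all the odd positions. *)
From mathcomp Require Import all_boot zify.

Set Implicit Arguments.
Unset Strict Implicit.

Lemma lexlt_irr s : lexlt s s = false.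
Proof. by elim: s => //= -[] s ->. Qed.

Lemma lexlt_nth s t p :
  (forall i, i < p -> nth false s i = nth false t i) ->
  nth false s p = false -> nth false t p = true -> lexlt s t.
Proof.
elim: p s t => [|p IHp] [|a s] [|b t] //=; first by move=> _ -> ->.
move=> eq_st sp tp; have /= -> := eq_st 0 isT.
by rewrite eqxx IHp ?orbT // => i lt_ip; apply: (eq_st i.+1).
Qed.

Lemma lexlt_true_rcons v : lexlt (true :: v) (rcons v true) = false.
Proof. by elim: v => //= -[]. Qed.

Lemma lexlt_rcons_false v : lexlt (rcons v false) (false :: v) = false.
Proof. by elim: v => //= -[]. Qed.

Lemma nth_rot k (w : seq bool) i : i + k < size w ->
  nth false (rot k w) i = nth false w (i + k).
Proof. by move=> lt_ik; rewrite nth_cat size_drop ifT ?nth_drop 1?addnC //; lia. Qed.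

Lemma lexlt_rot w k p :
  (forall i, i < p -> nth false w i = nth false w (i + k)) ->
  nth false w p = false -> nth false w (p + k) = true -> lexlt w (rot k w).
Proof.
move=> eq_w wp wpk.
have lt_pk : p + k < size w.
  by rewrite ltnNge; apply: contraTN wpk => /(nth_default false) ->.
by apply: (@lexlt_nth _ _ p) => [i lt_ip|//|]; rewrite nth_rot //; [exact: eq_w | lia].
Qed.

Lemma lyndon_of_rot w : w <> [::] ->
  (forall k, 0 < k < size w -> lexlt w (rot k w)) -> lyndon w.
Proof.
move=> w_ne w_rot; split=> //; split=> // u [|[|m]] // _ def_w.
have u_ne : u <> [::] by move=> u0; apply: w_ne; rewrite def_w u0 /=; elim: (m) => //.
have: 0 < size u < size w.
  rewrite def_w /= !size_cat; case: u u_ne {def_w} => //= *; lia.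
move/w_rot; suff -> : rot (size u) w = w by rewrite lexlt_irr.
rewrite def_w /= rot_size_cat -catA; congr (_ ++ _).
by elim: (m) => /= [|m' IHm]; rewrite ?cats0 // -catA IHm.
Qed.

Lemma lyndon_size_gt0 w : lyndon w -> 0 < size w.
Proof. by case: w => [[]|]. Qed.

Lemma lyndon_head w : lyndon w -> 1 < size w -> nth false w 0 = false.
Proof.
case: w => [|[] v] // [_ [_ w_rot]] /= lt1v; move: (w_rot 1).
by rewrite rot1_cons lexlt_true_rcons => /(_ lt1v).
Qed.

Lemma lyndon_last w : lyndon w -> 1 < size w -> nth false w (size w).-1 = true.
Proof.
case/lastP: w => [|v []] //; rewrite size_rcons nth_rcons ltnn eqxx //.
move=> [_ [_ w_rot]] lt1v; move: (w_rot (size v)).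
by rewrite -cats1 rot_size_cat cats1 lexlt_rcons_false size_rcons leqnn andbT => /(_ lt1v).
Qed.

Definition lyndon_cut (u : seq bool) (c : nat) : Prop :=
  lyndon (take c u) /\ lyndon (drop c u).

Lemma lyndon_fact_cut u p : lyndon_fact u p ->
  p = (take (size p.1) u, drop (size p.1) u) /\ lyndon_cut u (size p.1).
Proof.
by case: p => x y [/= -> [Lx Ly]]; rewrite /lyndon_cut take_size_cat // drop_size_cat.
Qed.

Lemma lyndon_cut_fact u c : lyndon_cut u c -> lyndon_fact u (take c u, drop c u).
Proof. by move=> [Lx Ly]; rewrite /lyndon_fact cat_take_drop. Qed.

Lemma lyndon_cut_range u c : lyndon_cut u c -> 0 < c < size u.
Proof.
move=> [/lyndon_size_gt0 + /lyndon_size_gt0]; rewrite size_drop subn_gt0 => + lt_cu.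
by rewrite size_takel ?lt_cu ?andbT // ltnW.
Qed.

Lemma lyndon_cut_prefix u c : lyndon_cut u c -> 1 < c ->
  nth false u 0 = false /\ nth false u c.-1 = true.
Proof.
move=> cut_c lt1c; have /andP[_ lt_cu] := lyndon_cut_range cut_c.
have [Lx _] := cut_c; have size_x : size (take c u) = c by rewrite size_takel // ltnW.
have := lyndon_head Lx; have := lyndon_last Lx; rewrite size_x !nth_take.
- by move=> /(_ lt1c) -> /(_ lt1c) ->.
all: lia.
Qed.

Lemma lyndon_cut_suffix u c : lyndon_cut u c -> c.+1 < size u ->
  nth false u c = false /\ nth false u (size u).-1 = true.
Proof.
move=> [_ Ly] lt_c1u; have size_y : size (drop c u) = size u - c by rewrite size_drop.
have := lyndon_head Ly; have := lyndon_last Ly; rewrite size_y !nth_drop addn0.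
have lt1y : 1 < size u - c by lia.
by rewrite (_ : c + (size u - c).-1 = (size u).-1) => [/(_ lt1y) -> /(_ lt1y) ->|]; lia.
Qed.

Lemma lyndon_cut_succ u c : lyndon_cut u c -> ~ lyndon_cut u c.+1.
Proof.
move=> cut_c cut_c1; have /andP[c_gt0 _] := lyndon_cut_range cut_c.
have /andP[_ lt_c1u] := lyndon_cut_range cut_c1.
have [_ /= uc] := lyndon_cut_prefix cut_c1 (c_gt0 : 1 < c.+1).
by have [] := lyndon_cut_suffix cut_c lt_c1u; rewrite uc.
Qed.

Section SparseSet.

Variables (L : nat) (s : seq nat).
Hypothesis s_uniq : uniq s.
Hypothesis s_range : forall x, x \in s -> 0 < x < L.
Hypothesis s_sparse : forall x, x \in s -> x.+1 \notin s.

Let shift_uniq : uniq (s ++ map succn s).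
Proof.
rewrite cat_uniq s_uniq (map_inj_uniq succn_inj) s_uniq andbT /=.
by apply/hasPn => _ /mapP[x /s_sparse x1 ->].
Qed.

Let shift_sub : {subset s ++ map succn s <= iota 1 L}.
Proof.
move=> y; rewrite mem_cat mem_iota => /orP[/s_range | /mapP[x /s_range ? ->]]; lia.
Qed.

Lemma sparse_size_le : 2 * size s <= L.
Proof.
have := uniq_leq_size shift_uniq shift_sub.
by rewrite size_cat size_map size_iota addnn -mul2n.
Qed.

Lemma sparse_odd_mem : L <= 2 * size s -> forall i, odd i -> i < L -> i \in s.
Proof.
move=> le_L2s.
have le_size : size (iota 1 L) <= size (s ++ map succn s).
  by rewrite size_iota size_cat size_map addnn -mul2n.
have [_ eq_shift] := uniq_min_size shift_uniq shift_sub le_size.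
have cover y : 0 < y <= L -> (y \in s) || (y.-1 \in s).
  move=> y_range; have : y \in iota 1 L by rewrite mem_iota; lia.
  by rewrite -eq_shift mem_cat => /orP[-> // | /mapP[x xs ->]]; rewrite xs orbT.
suff odd_mem j : j.*2.+1 < L -> j.*2.+1 \in s.
  by move=> i odd_i lt_iL; rewrite -(odd_double_half i) odd_i; apply: odd_mem; lia.
elim: j => [|j IHj] lt_jL.
  by have /orP[// | /s_range] : (1 \in s) || (0 \in s) by apply: cover; lia.
have /orP[// | j2] : (j.+1.*2.+1 \in s) || (j.+1.*2 \in s) by apply: cover; lia.
have /negP[] := s_sparse (IHj (ltnW (ltnW lt_jL))).
by rewrite doubleS in j2.
Qed.

End SparseSet.

Lemma size_flatten_nseq T m (s : seq T) : size (flatten (nseq m s)) = m * size s.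
Proof. by elim: m => //= m IHm; rewrite size_cat IHm mulSn. Qed.

Lemma nth_flatten_nseq2 T (x0 a b : T) m j : j < 2 * m ->
  nth x0 (flatten (nseq m [:: a; b])) j = if odd j then b else a.
Proof. by elim: m j => [|m IHm] [|[|j]] //= lt_j; rewrite IHm ?negbK //; lia. Qed.

Lemma size_wordn n : 2 <= n -> size (wordn n) = 2 * n.
Proof. by move=> n_ge2; rewrite /wordn !size_cat size_flatten_nseq /=; lia. Qed.

Lemma nth_wordn n i : 2 <= n -> i < 2 * n ->
  nth false (wordn n) i = (0 < i) && (~~ odd i || (i == (2 * n).-1)).
Proof.
move=> n_ge2 lt_i; rewrite /wordn; case: i lt_i => [|[|i]] lt_i /=; try lia.
rewrite nth_cat size_flatten_nseq /= negbK; case: ifP => [lt_i2 | ge_i2].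
  by rewrite nth_flatten_nseq2; [case: ifP | ]; lia.
have [-> | ->] : i - (n - 2) * 2 = 0 \/ i - (n - 2) * 2 = 1 by lia.
all: rewrite /=; lia.
Qed.

Section WordnCuts.

Variables (n c : nat).
Hypothesis n_ge2 : 2 <= n.
Hypothesis odd_c : odd c.
Hypothesis lt_c : c < 2 * n.

Lemma lyndon_take_wordn : lyndon (take c (wordn n)).
Proof.
have size_x : size (take c (wordn n)) = c by rewrite size_takel // size_wordn // ltnW.
have x_nth i : i < c -> nth false (take c (wordn n)) i = (0 < i) && ~~ odd i.
  by move=> lt_ic; rewrite nth_take // nth_wordn //; lia.
apply: lyndon_of_rot => [/(congr1 size) | k]; rewrite size_x /=; first by lia.
move=> /andP[k_gt0 lt_kc]; case: (boolP (odd k)) => odd_k.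
  by apply: (@lexlt_rot _ _ 1) => [[|//] _||]; rewrite !x_nth //; lia.
by apply: (@lexlt_rot _ _ 0) => //; rewrite !x_nth //; lia.
Qed.

Lemma lyndon_drop_wordn : lyndon (drop c (wordn n)).
Proof.
have size_y : size (drop c (wordn n)) = 2 * n - c by rewrite size_drop size_wordn.
have y_nth i : i < 2 * n - c ->
    nth false (drop c (wordn n)) i = odd i || (i == (2 * n - c).-1).
  by move=> lt_i; rewrite nth_drop nth_wordn //; lia.
apply: lyndon_of_rot => [/(congr1 size) | k]; rewrite size_y /=; first by lia.
move=> /andP[k_gt0 lt_k]; case: (boolP (odd k || (k == (2 * n - c).-1))) => yk.
  by apply: (@lexlt_rot _ _ 0) => //; rewrite !y_nth //; lia.
(* The suffix is (01)^m 1, so an even rotation first differs from it where the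
   rotation meets the final letter 1. *)
apply: (@lexlt_rot _ _ ((2 * n - c).-1 - k)) => [i lt_i||]; rewrite !y_nth //; lia.
Qed.

End WordnCuts.

Lemma lyndon_cut_wordn n c : 2 <= n ->
  lyndon_cut (wordn n) c <-> odd c && (c < 2 * n).
Proof.
move=> n_ge2; split=> [cut_c | /andP[odd_c lt_c]]; last first.
  by split; [apply: lyndon_take_wordn | apply: lyndon_drop_wordn].
have /andP[c_gt0 lt_c] := lyndon_cut_range cut_c; rewrite size_wordn // in lt_c.
rewrite lt_c andbT; apply: contraT => even_c.
have [_] := lyndon_cut_prefix cut_c ltac:(lia).
by rewrite nth_wordn //; lia.
Qed.

Lemma wordn_of_odd_cuts n u : 2 <= n -> size u = 2 * n ->
  (forall c, odd c -> c < 2 * n -> lyndon_cut u c) -> u = wordn n.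
Proof.
move=> n_ge2 size_u cut_u.
apply: (@eq_from_nth _ false) => [|i]; first by rewrite size_wordn.
rewrite size_u => lt_i; rewrite nth_wordn //.
have [-> | i_last] := eqVneq i (2 * n).-1.
  have [_] := lyndon_cut_suffix (cut_u 1 isT ltac:(lia)) ltac:(lia).
  by rewrite size_u => ->; rewrite orbT andbT; lia.
case: (boolP (odd i)) => odd_i.
  by have [-> _] := lyndon_cut_suffix (cut_u i odd_i lt_i) ltac:(lia); rewrite andbF.
have [-> | i_gt0] := posnP i.
  by have [-> _] := lyndon_cut_prefix (cut_u (2 * n).-1 ltac:(lia) ltac:(lia)) ltac:(lia).
by have [_ /= ->] := lyndon_cut_prefix (cut_u i.+1 odd_i ltac:(lia)) ltac:(lia).
Qed.

Lemma count_odd_iota n : count odd (iota 0 (2 * n)) = n.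
Proof. by elim: n => // n IHn; rewrite mulnSr iotaD count_cat IHn /=; lia. Qed.

Lemma wordn_has_n_fact n : 2 <= n -> has_n_fact (wordn n) n.
Proof.
move=> n_ge2; set w := wordn n.
exists [seq (take c w, drop c w) | c <- iota 0 (2 * n) & odd c]; split.
- rewrite map_inj_in_uniq ?filter_uniq ?iota_uniq // => c d.
  rewrite !mem_filter !mem_iota => /andP[_ lt_c] /andP[_ lt_d] [/(congr1 size)].
  by rewrite !size_takel ?size_wordn //; lia.
- by rewrite size_map size_filter count_odd_iota.
move=> p; split=> [/lyndon_fact_cut[eq_p /(lyndon_cut_wordn _ n_ge2)/andP[odd_c lt_c]] |].
  by rewrite eq_p; apply: map_f; rewrite mem_filter mem_iota odd_c lt_c.
move=> /mapP[c]; rewrite mem_filter mem_iota => /andP[odd_c /= lt_c] ->.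
by apply/lyndon_cut_fact/lyndon_cut_wordn; rewrite ?odd_c.
Qed.

Lemma wordn_shortest n u : 2 <= n -> has_atleast_n_fact u n -> size u <= 2 * n ->
  u = wordn n.
Proof.
move=> n_ge2 [l [l_uniq size_l l_fact]] le_u.
set s := [seq size p.1 | p <- l].
have s_cut c : c \in s -> lyndon_cut u c.
  by move=> /mapP[p /l_fact/lyndon_fact_cut[_ ?] ->].
have s_uniq : uniq s.
  rewrite map_inj_in_uniq // => p q /l_fact/lyndon_fact_cut[eq_p _].
  by move=> /l_fact/lyndon_fact_cut[eq_q _] eq_size; rewrite eq_p eq_q eq_size.
have s_range c : c \in s -> 0 < c < size u by move/s_cut/lyndon_cut_range.
have s_sparse c : c \in s -> c.+1 \notin s.
  by move=> /s_cut cut_c; apply/negP => /s_cut/(lyndon_cut_succ cut_c).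
have size_s : size s = n by rewrite size_map.
have le_2n := sparse_size_le s_uniq s_range s_sparse.
have size_u : size u = 2 * n by lia.
apply: wordn_of_odd_cuts => // c odd_c lt_c; apply: s_cut.
by apply: (sparse_odd_mem s_uniq s_range s_sparse); lia.
Qed.

Theorem mainTheorem3 (n : nat) : 3 <= n ->
  [/\ has_n_fact (wordn n) n,
      size (wordn n) = 2 * n
    & forall u : seq bool, has_atleast_n_fact u n -> u <> wordn n ->
        size (wordn n) < size u].
Proof.
move=> n_ge3; have n_ge2 : 2 <= n by lia.
split; [exact: wordn_has_n_fact | exact: size_wordn |].
move=> u fact_u ne_u; rewrite size_wordn // ltnNge; apply/negP => le_u.
exact/ne_u/wordn_shortest.
Qed.
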